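(* Let $\mu\in(0,1/2)$ and $\varepsilon\in(0,1)$. If $u(f)$ is a solution of the Euler–Lagrange equations of the modified Lagrangian $\mathcal{L}(u,u',f)$ defined below, with initial data $u(0),u'(0)$ satisfying $u(0)\neq 0$ and $l(u(0),u'(0))=0$, then $u(f)$ is also a solution of the Euler–Lagrange equations of $\mathscr{L}(u,u',f)$ (defined below), as long as $u(f)\neq 0$.
   Context: Primes denote derivatives with respect to $f\in\mathbb{R}$. For $q\in\mathbb{R}^3\setminus\{0,(-1,0,0)\}$, $q'\in\mathbb{R}^3$, let $$\widetilde{L}(q,q',f)=\tfrac12\|q'\|^2+q_1q_2'-q_2q_1'+\frac{1}{1+\varepsilon\cos f}\Big[(1-\mu)\Big(\frac{1}{\|q+(1,0,0)\|}+q_1\Big)+\frac{\mu}{\|q\|}+\tfrac12\big(q_1^2+q_2^2-q_3^2\varepsilon\cos f\big)\Big].$$ Let $\pi:\mathbb{R}^4\to\mathbb{R}^3$, $\pi(u)=(u_1^2-u_2^2-u_3^2+u_4^2,\;2u_1u_2-2u_3u_4,\;2u_1u_3+2u_2u_4)$ (the Kustaanheimo–Stiefel map). Define $\mathscr{L}(u,u',f)=\widetilde{L}\big(\pi(u),\tfrac{\partial\pi}{\partial u}(u)u',f\big)$, the bilinear form $l(u,u')=u_4u_1'-u_3u_2'+u_2u_3'-u_1u_4'$, and the modified Lagrangian $\mathcal{L}(u,u',f)=\mathscr{L}(u,u',f)+2\,l(u,u')^2$. *)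

From Stdlib Require Import Reals.
From Coquelicot Require Import Coquelicot.
Open Scope R_scope.

(* Points of R^4 are represented as functions nat -> R; only the
   components 0,1,2,3 (= u_1,...,u_4 of the paper) are ever used. *)
Definition V4 := nat -> R.

Definition Lagr := V4 -> V4 -> R -> R.

(* The Lagrangian \tilde L(q,q',f) of the spatial elliptic RTBP. *)
Definition Ltilde (mu eps q1 q2 q3 p1 p2 p3 f : R) : R :=
  / 2 * (p1 ^ 2 + p2 ^ 2 + p3 ^ 2) + q1 * p2 - q2 * p1
  + / (1 + eps * cos f) *
    ((1 - mu) * (/ sqrt ((q1 + 1) ^ 2 + q2 ^ 2 + q3 ^ 2) + q1)
     + mu / sqrt (q1 ^ 2 + q2 ^ 2 + q3 ^ 2)
     + / 2 * (q1 ^ 2 + q2 ^ 2 - q3 ^ 2 * eps * cos f)).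

(* Kustaanheimo-Stiefel map pi (components, 0-indexed: u 0 = u_1, ...). *)
Definition KS1 (u : V4) := u 0%nat ^ 2 - u 1%nat ^ 2 - u 2%nat ^ 2 + u 3%nat ^ 2.
Definition KS2 (u : V4) := 2 * u 0%nat * u 1%nat - 2 * u 2%nat * u 3%nat.
Definition KS3 (u : V4) := 2 * u 0%nat * u 2%nat + 2 * u 1%nat * u 3%nat.

(* (d pi / d u)(u) v, written out componentwise. *)
Definition dKS1 (u v : V4) :=
  2 * u 0%nat * v 0%nat - 2 * u 1%nat * v 1%nat
  - 2 * u 2%nat * v 2%nat + 2 * u 3%nat * v 3%nat.
Definition dKS2 (u v : V4) :=
  2 * (v 0%nat * u 1%nat + u 0%nat * v 1%nat)
  - 2 * (v 2%nat * u 3%nat + u 2%nat * v 3%nat).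
Definition dKS3 (u v : V4) :=
  2 * (v 0%nat * u 2%nat + u 0%nat * v 2%nat)
  + 2 * (v 1%nat * u 3%nat + u 1%nat * v 3%nat).

Definition scrL (mu eps : R) : Lagr := fun u v f =>
  Ltilde mu eps (KS1 u) (KS2 u) (KS3 u) (dKS1 u v) (dKS2 u v) (dKS3 u v) f.

Definition lform (u v : V4) : R :=
  u 3%nat * v 0%nat - u 2%nat * v 1%nat + u 1%nat * v 2%nat - u 0%nat * v 3%nat.

Definition modL (mu eps : R) : Lagr := fun u v f =>
  scrL mu eps u v f + 2 * (lform u v) ^ 2.

Definition upd (v : V4) (i : nat) (x : R) : V4 :=
  fun j => if Nat.eqb j i then x else v j.

Definition dLq (L : Lagr) (i : nat) (u v : V4) (f : R) : R :=
  Derive (fun x => L (upd u i x) v f) (u i).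
Definition dLv (L : Lagr) (i : nat) (u v : V4) (f : R) : R :=
  Derive (fun x => L u (upd v i x) f) (v i).

Definition vel (u : R -> V4) (f : R) : V4 := fun j => Derive (fun s => u s j) f.

Definition EL_solution (L : Lagr) (a b : R) (u : R -> V4) : Prop :=
  forall f, a < f < b ->
    (forall j, (j < 4)%nat -> ex_derive (fun s => u s j) f) /\
    (forall i, (i < 4)%nat ->
       is_derive (fun g => dLv L i (u g) (vel u g) g) f
                 (dLq L i (u f) (vel u f) f)).

Definition nonzero4 (u : V4) : Prop :=
  ~ (u 0%nat = 0 /\ u 1%nat = 0 /\ u 2%nat = 0 /\ u 3%nat = 0).

(* The fibres of the Kustaanheimo-Stiefel map are the circles
   u -> cos t u + sin t J u, where J = ks_gen; both pi(u) and (d pi/du)(u) u' are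
   invariant under the induced rotation of (u, u'), hence so is \mathscr{L}, and
   l(u, u') = <J u, u'> is invariant as well.  Noether's theorem then makes the
   charge sum_i (d\mathcal{L}/du'_i) (J u)_i a first integral of the modified
   Lagrangian.  The \mathscr{L} part of the charge vanishes because
   (d pi/du)(u) J u = 0, and what remains is 4 l(u, u') |u|^2; so l = 0 along the
   solution as soon as it vanishes initially.  Where l = 0 the term 2 l^2 has zero
   partial derivatives, and the two Euler-Lagrange systems coincide.  No bound on
   mu or eps is used. *)

From Stdlib Require Import Reals Lra Lia FunctionalExtensionality.
From Coquelicot Require Import Coquelicot.
Open Scope R_scope.

Ltac rewrite_derives x :=
  repeat match goal with
  | |- context [Derive ?g x] => erewrite (is_derive_unique g x); [|eassumption]
  end.

Lemma is_derive_plus_twice_sq (F G : R -> R) (x dF dG : R) :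
  is_derive F x dF -> is_derive G x dG ->
  is_derive (fun y => F y + 2 * G y ^ 2) x (dF + 4 * G x * dG).
Proof.
  intros HF HG; auto_derive.
  - split; [|split]; eexists; eassumption.
  - rewrite_derives x; ring.
Qed.

Lemma is_derive_zero_const (N : R -> R) (a b : R) :
  (forall x, a < x < b -> is_derive N x 0) ->
  forall x y, a < x < b -> a < y < b -> N x = N y.
Proof.
  intros HN x y Hx Hy.
  assert (Hin : forall z, Rmin x y <= z <= Rmax x y -> a < z < b).
  { intros z Hz; split.
    - apply Rlt_le_trans with (Rmin x y); [apply Rmin_glb_lt|]; lra.
    - apply Rle_lt_trans with (Rmax x y); [|apply Rmax_lub_lt]; lra. }
  destruct (MVT_gen N x y (fun _ => 0)) as (c & _ & Hc).
  - intros z Hz; apply HN, Hin; lra.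
  - intros z Hz; apply continuity_pt_filterlim, (ex_derive_continuous N).
    exists 0; apply HN, Hin; exact Hz.
  - lra.
Qed.

Definition dot4 (x y : V4) : R :=
  x 0%nat * y 0%nat + x 1%nat * y 1%nat + x 2%nat * y 2%nat + x 3%nat * y 3%nat.

Lemma dot4_ext (x y w : V4) : (forall i, (i < 4)%nat -> x i = y i) -> dot4 x w = dot4 y w.
Proof. intros H; unfold dot4; rewrite !H by lia; reflexivity. Qed.

Lemma dot4_addl_scale (x y w : V4) (c : R) :
  dot4 (fun i => x i + c * y i) w = dot4 x w + c * dot4 y w.
Proof. unfold dot4; ring. Qed.

Lemma dot4_self_pos (w : V4) : nonzero4 w -> 0 < dot4 w w.
Proof.
  intros H; apply Rnot_le_lt; intros Hle; apply H; unfold dot4 in Hle; repeat split; nra.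
Qed.

Lemma is_derive_dot4 (P W : nat -> R -> R) (x : R) (dP dW : V4) :
  (forall j, (j < 4)%nat -> is_derive (P j) x (dP j)) ->
  (forall j, (j < 4)%nat -> is_derive (W j) x (dW j)) ->
  is_derive (fun y => dot4 (fun j => P j y) (fun j => W j y)) x
    (dot4 dP (fun j => W j x) + dot4 (fun j => P j x) dW).
Proof.
  intros HP HW.
  pose proof (HP 0%nat ltac:(lia)); pose proof (HP 1%nat ltac:(lia));
  pose proof (HP 2%nat ltac:(lia)); pose proof (HP 3%nat ltac:(lia));
  pose proof (HW 0%nat ltac:(lia)); pose proof (HW 1%nat ltac:(lia));
  pose proof (HW 2%nat ltac:(lia)); pose proof (HW 3%nat ltac:(lia)).
  unfold dot4; auto_derive.
  - repeat split; eexists; eassumption.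
  - rewrite_derives x; ring.
Qed.

Definition Ltilde_dir (mu eps f q1 q2 q3 p1 p2 p3 dq1 dq2 dq3 dp1 dp2 dp3 : R) : R :=
  (p1 * dp1 + p2 * dp2 + p3 * dp3) + (dq1 * p2 + q1 * dp2 - dq2 * p1 - q2 * dp1)
  + / (1 + eps * cos f) *
   ((1 - mu) * (- ((q1 + 1) * dq1 + q2 * dq2 + q3 * dq3)
                 / (((q1 + 1) ^ 2 + q2 ^ 2 + q3 ^ 2) * sqrt ((q1 + 1) ^ 2 + q2 ^ 2 + q3 ^ 2)) + dq1)
    + mu * (- (q1 * dq1 + q2 * dq2 + q3 * dq3)
                 / ((q1 ^ 2 + q2 ^ 2 + q3 ^ 2) * sqrt (q1 ^ 2 + q2 ^ 2 + q3 ^ 2)))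
    + (q1 * dq1 + q2 * dq2 - q3 * dq3 * eps * cos f)).

Lemma is_derive_Ltilde mu eps f (q1 q2 q3 p1 p2 p3 : R -> R) x dq1 dq2 dq3 dp1 dp2 dp3 :
  is_derive q1 x dq1 -> is_derive q2 x dq2 -> is_derive q3 x dq3 ->
  is_derive p1 x dp1 -> is_derive p2 x dp2 -> is_derive p3 x dp3 ->
  0 < (q1 x + 1) ^ 2 + q2 x ^ 2 + q3 x ^ 2 ->
  0 < q1 x ^ 2 + q2 x ^ 2 + q3 x ^ 2 ->
  is_derive (fun y => Ltilde mu eps (q1 y) (q2 y) (q3 y) (p1 y) (p2 y) (p3 y) f) x
    (Ltilde_dir mu eps f (q1 x) (q2 x) (q3 x) (p1 x) (p2 x) (p3 x)
       dq1 dq2 dq3 dp1 dp2 dp3).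
Proof.
  intros H1 H2 H3 H4 H5 H6 HT HS.
  assert (ET : (q1 x + 1) * ((q1 x + 1) * 1) + q2 x * (q2 x * 1) + q3 x * (q3 x * 1)
               = (q1 x + 1) ^ 2 + q2 x ^ 2 + q3 x ^ 2) by ring.
  assert (ES : q1 x * (q1 x * 1) + q2 x * (q2 x * 1) + q3 x * (q3 x * 1)
               = q1 x ^ 2 + q2 x ^ 2 + q3 x ^ 2) by ring.
  unfold Ltilde; auto_derive; rewrite ET, ES.
  - repeat split;
      solve [eexists; eassumption | assumption | apply Rgt_not_eq, sqrt_lt_R0; assumption].
  - rewrite_derives x.
    unfold Ltilde_dir.
    pose proof (sqrt_sqrt _ (Rlt_le _ _ HT)) as eT.
    pose proof (sqrt_sqrt _ (Rlt_le _ _ HS)) as eS.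
    pose proof (sqrt_lt_R0 _ HT). pose proof (sqrt_lt_R0 _ HS).
    set (T := (q1 x + 1) ^ 2 + q2 x ^ 2 + q3 x ^ 2) in *.
    set (S := q1 x ^ 2 + q2 x ^ 2 + q3 x ^ 2) in *.
    set (rT := sqrt T) in *. set (rS := sqrt S) in *.
    (* abstracting the constant factor [k] spares [field] the side condition
       1 + eps cos f <> 0 *)
    set (k := / (1 + eps * cos f)).
    clearbody rT rS T S k. rewrite <- eT, <- eS.
    field; lra.
Qed.

Definition basis (i : nat) : V4 := fun j => if Nat.eqb j i then 1 else 0.

Lemma upd_same (u : V4) (i : nat) : upd u i (u i) = u.
Proof.
  apply functional_extensionality; intro j; unfold upd.
  destruct (Nat.eqb_spec j i) as [->|]; reflexivity.
Qed.

Ltac coordinate_derive i :=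
  destruct i as [|[|[|[|i]]]]; [| | | | lia];
  unfold upd, basis, KS1, KS2, KS3, dKS1, dKS2, dKS3, lform; cbn [Nat.eqb];
  auto_derive; auto; ring.

Lemma is_derive_KS_upd (u : V4) (i : nat) : (i < 4)%nat ->
  is_derive (fun x => KS1 (upd u i x)) (u i) (dKS1 u (basis i)) /\
  is_derive (fun x => KS2 (upd u i x)) (u i) (dKS2 u (basis i)) /\
  is_derive (fun x => KS3 (upd u i x)) (u i) (dKS3 u (basis i)).
Proof. intros Hi; split; [|split]; coordinate_derive i. Qed.

Lemma is_derive_dKS_upd_l (u v : V4) (i : nat) : (i < 4)%nat ->
  is_derive (fun x => dKS1 (upd u i x) v) (u i) (dKS1 (basis i) v) /\
  is_derive (fun x => dKS2 (upd u i x) v) (u i) (dKS2 (basis i) v) /\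
  is_derive (fun x => dKS3 (upd u i x) v) (u i) (dKS3 (basis i) v).
Proof. intros Hi; split; [|split]; coordinate_derive i. Qed.

Lemma is_derive_dKS_upd_r (u v : V4) (i : nat) : (i < 4)%nat ->
  is_derive (fun x => dKS1 u (upd v i x)) (v i) (dKS1 u (basis i)) /\
  is_derive (fun x => dKS2 u (upd v i x)) (v i) (dKS2 u (basis i)) /\
  is_derive (fun x => dKS3 u (upd v i x)) (v i) (dKS3 u (basis i)).
Proof. intros Hi; split; [|split]; coordinate_derive i. Qed.

Lemma is_derive_lform_upd_l (u v : V4) (i : nat) : (i < 4)%nat ->
  is_derive (fun x => lform (upd u i x) v) (u i) (lform (basis i) v).
Proof. intros Hi; coordinate_derive i. Qed.

Lemma is_derive_lform_upd_r (u v : V4) (i : nat) : (i < 4)%nat ->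
  is_derive (fun x => lform u (upd v i x)) (v i) (lform u (basis i)).
Proof. intros Hi; coordinate_derive i. Qed.

Lemma dot4_lform_basis_l (v w : V4) : dot4 (fun i => lform (basis i) v) w = lform w v.
Proof. unfold dot4, lform, basis; cbn [Nat.eqb]; ring. Qed.

Lemma dot4_lform_basis_r (u w : V4) : dot4 (fun i => lform u (basis i)) w = lform u w.
Proof. unfold dot4, lform, basis; cbn [Nat.eqb]; ring. Qed.

Definition noncollision (w : V4) : Prop :=
  nonzero4 w /\ ~ (KS1 w = -1 /\ KS2 w = 0 /\ KS3 w = 0).

Lemma sum_sq3_pos (x y z : R) : ~ (x = 0 /\ y = 0 /\ z = 0) -> 0 < x ^ 2 + y ^ 2 + z ^ 2.
Proof. intros H; apply Rnot_le_lt; intros Hle; apply H; repeat split; nra. Qed.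

Lemma KS_norm (w : V4) : KS1 w ^ 2 + KS2 w ^ 2 + KS3 w ^ 2 = dot4 w w ^ 2.
Proof. unfold KS1, KS2, KS3, dot4; ring. Qed.

Lemma noncollision_primary1 (w : V4) :
  noncollision w -> 0 < (KS1 w + 1) ^ 2 + KS2 w ^ 2 + KS3 w ^ 2.
Proof.
  intros [_ H]; apply sum_sq3_pos; intros (H1 & H2 & H3); apply H; repeat split; lra.
Qed.

Lemma noncollision_primary2 (w : V4) :
  noncollision w -> 0 < KS1 w ^ 2 + KS2 w ^ 2 + KS3 w ^ 2.
Proof. intros [H _]; rewrite KS_norm; apply pow_lt, dot4_self_pos, H. Qed.

Section Partials.

Variables (mu eps : R).

Definition scrL_dq (u v : V4) (f : R) : V4 := fun i =>
  Ltilde_dir mu eps f (KS1 u) (KS2 u) (KS3 u) (dKS1 u v) (dKS2 u v) (dKS3 u v)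
    (dKS1 u (basis i)) (dKS2 u (basis i)) (dKS3 u (basis i))
    (dKS1 (basis i) v) (dKS2 (basis i) v) (dKS3 (basis i) v).

Definition scrL_dv (u v : V4) (f : R) : V4 := fun i =>
  Ltilde_dir mu eps f (KS1 u) (KS2 u) (KS3 u) (dKS1 u v) (dKS2 u v) (dKS3 u v)
    0 0 0 (dKS1 u (basis i)) (dKS2 u (basis i)) (dKS3 u (basis i)).

Variables (u v : V4) (f : R) (i : nat).
Hypotheses (Hi : (i < 4)%nat) (Hu : noncollision u).

Lemma is_derive_scrL_q :
  is_derive (fun x => scrL mu eps (upd u i x) v f) (u i) (scrL_dq u v f i).
Proof.
  destruct (is_derive_KS_upd u i Hi) as (k1 & k2 & k3).
  destruct (is_derive_dKS_upd_l u v i Hi) as (d1 & d2 & d3).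
  pose proof (is_derive_Ltilde mu eps f _ _ _ _ _ _ _ _ _ _ _ _ _ k1 k2 k3 d1 d2 d3) as H.
  cbv beta in H; rewrite !upd_same in H.
  exact (H (noncollision_primary1 u Hu) (noncollision_primary2 u Hu)).
Qed.

Lemma is_derive_scrL_v :
  is_derive (fun x => scrL mu eps u (upd v i x) f) (v i) (scrL_dv u v f i).
Proof.
  destruct (is_derive_dKS_upd_r u v i Hi) as (d1 & d2 & d3).
  pose proof (is_derive_Ltilde mu eps f (fun _ => KS1 u) (fun _ => KS2 u) (fun _ => KS3 u)
    _ _ _ _ _ _ _ _ _ _ (is_derive_const _ _) (is_derive_const _ _) (is_derive_const _ _)
    d1 d2 d3) as H.
  cbv beta in H; rewrite !upd_same in H.
  exact (H (noncollision_primary1 u Hu) (noncollision_primary2 u Hu)).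
Qed.

Lemma dLq_scrL : dLq (scrL mu eps) i u v f = scrL_dq u v f i.
Proof. exact (is_derive_unique _ _ _ is_derive_scrL_q). Qed.

Lemma dLv_scrL : dLv (scrL mu eps) i u v f = scrL_dv u v f i.
Proof. exact (is_derive_unique _ _ _ is_derive_scrL_v). Qed.

Lemma dLq_modL :
  dLq (modL mu eps) i u v f = scrL_dq u v f i + 4 * lform u v * lform (basis i) v.
Proof.
  apply is_derive_unique.
  pose proof (is_derive_plus_twice_sq _ _ _ _ _
    is_derive_scrL_q (is_derive_lform_upd_l u v i Hi)) as H.
  cbv beta in H; rewrite upd_same in H; exact H.
Qed.

Lemma dLv_modL :
  dLv (modL mu eps) i u v f = scrL_dv u v f i + 4 * lform u v * lform u (basis i).
Proof.
  apply is_derive_unique.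
  pose proof (is_derive_plus_twice_sq _ _ _ _ _
    is_derive_scrL_v (is_derive_lform_upd_r u v i Hi)) as H.
  cbv beta in H; rewrite upd_same in H; exact H.
Qed.

End Partials.

Definition ks_gen (u : V4) : V4 := fun j =>
  match j with
  | 0%nat => u 3%nat
  | 1%nat => - u 2%nat
  | 2%nat => u 1%nat
  | 3%nat => - u 0%nat
  | _ => 0
  end.

Lemma lform_ks_gen_self (u : V4) : lform u (ks_gen u) = dot4 u u.
Proof. unfold lform, ks_gen, dot4; ring. Qed.

Lemma lform_ks_gen_skew (u v : V4) : lform (ks_gen u) v + lform u (ks_gen v) = 0.
Proof. unfold lform, ks_gen; ring. Qed.

Ltac abstract_reciprocals :=
  unfold Ltilde_dir, Rdiv;
  set (k := / (1 + _ * cos _));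
  set (rT := / (_ * sqrt _)); set (rS := / (_ * sqrt _));
  clearbody k rT rS.

Lemma scrL_dv_ks_gen mu eps (u v : V4) f : dot4 (scrL_dv mu eps u v f) (ks_gen u) = 0.
Proof.
  unfold dot4, scrL_dv; abstract_reciprocals.
  unfold basis, ks_gen, KS1, KS2, KS3, dKS1, dKS2, dKS3; cbn [Nat.eqb]; ring.
Qed.

Lemma scrL_ks_invariant mu eps (u v : V4) f :
  dot4 (scrL_dq mu eps u v f) (ks_gen u) + dot4 (scrL_dv mu eps u v f) (ks_gen v) = 0.
Proof.
  unfold dot4, scrL_dq, scrL_dv; abstract_reciprocals.
  unfold basis, ks_gen, KS1, KS2, KS3, dKS1, dKS2, dKS3; cbn [Nat.eqb]; ring.
Qed.

Definition charge (L : Lagr) (u v : V4) (f : R) : R :=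
  dot4 (fun i => dLv L i u v f) (ks_gen u).

Definition ks_variation (L : Lagr) (u v : V4) (f : R) : R :=
  dot4 (fun i => dLq L i u v f) (ks_gen u) + dot4 (fun i => dLv L i u v f) (ks_gen v).

Lemma is_derive_ks_gen (w : R -> V4) (x : R) (dw : V4) :
  (forall j, (j < 4)%nat -> is_derive (fun y => w y j) x (dw j)) ->
  forall j, (j < 4)%nat -> is_derive (fun y => ks_gen (w y) j) x (ks_gen dw j).
Proof.
  intros Hw j Hj; destruct j as [|[|[|[|j]]]]; [| | | | lia]; cbn [ks_gen];
    auto using is_derive_opp with arith.
Qed.

Lemma is_derive_charge (L : Lagr) (a b : R) (u : R -> V4) (f : R) :
  EL_solution L a b u -> a < f < b ->
  is_derive (fun g => charge L (u g) (vel u g) g) f (ks_variation L (u f) (vel u f) f).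
Proof.
  intros Hsol Hf; destruct (Hsol f Hf) as [Hex Hel].
  apply (is_derive_dot4 (fun i g => dLv L i (u g) (vel u g) g) (fun j g => ks_gen (u g) j)).
  - exact Hel.
  - apply is_derive_ks_gen; intros j Hj; exact (Derive_correct _ _ (Hex j Hj)).
Qed.

Lemma charge_modL mu eps (u v : V4) f :
  noncollision u -> charge (modL mu eps) u v f = 4 * lform u v * dot4 u u.
Proof.
  intros Hu; unfold charge.
  rewrite (dot4_ext (fun i => dLv (modL mu eps) i u v f)
             (fun i => scrL_dv mu eps u v f i + 4 * lform u v * lform u (basis i)))
    by (intros i Hi; exact (dLv_modL mu eps u v f i Hi Hu)).
  rewrite dot4_addl_scale, dot4_lform_basis_r, scrL_dv_ks_gen, lform_ks_gen_self; ring.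
Qed.

Lemma modL_ks_invariant mu eps (u v : V4) f :
  noncollision u -> ks_variation (modL mu eps) u v f = 0.
Proof.
  intros Hu; unfold ks_variation.
  rewrite (dot4_ext (fun i => dLq (modL mu eps) i u v f)
             (fun i => scrL_dq mu eps u v f i + 4 * lform u v * lform (basis i) v))
    by (intros i Hi; exact (dLq_modL mu eps u v f i Hi Hu)).
  rewrite (dot4_ext (fun i => dLv (modL mu eps) i u v f)
             (fun i => scrL_dv mu eps u v f i + 4 * lform u v * lform u (basis i)))
    by (intros i Hi; exact (dLv_modL mu eps u v f i Hi Hu)).
  rewrite !dot4_addl_scale, dot4_lform_basis_l, dot4_lform_basis_r.
  transitivity (dot4 (scrL_dq mu eps u v f) (ks_gen u) + dot4 (scrL_dv mu eps u v f) (ks_gen v)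
    + 4 * lform u v * (lform (ks_gen u) v + lform u (ks_gen v))); [ring|].
  rewrite scrL_ks_invariant, lform_ks_gen_skew; ring.
Qed.

Lemma modL_solution_lform_zero mu eps (a b : R) (u : R -> V4) :
  a < 0 < b -> (forall f, a < f < b -> noncollision (u f)) ->
  EL_solution (modL mu eps) a b u -> lform (u 0) (vel u 0) = 0 ->
  forall f, a < f < b -> lform (u f) (vel u f) = 0.
Proof.
  intros H0 Hdom Hsol Hl0 f Hf.
  assert (Hcharge : charge (modL mu eps) (u f) (vel u f) f
                    = charge (modL mu eps) (u 0) (vel u 0) 0).
  { apply (is_derive_zero_const (fun g => charge (modL mu eps) (u g) (vel u g) g) a b);
      [intros g Hg | exact Hf | exact H0].
    rewrite <- (modL_ks_invariant mu eps (u g) (vel u g) g (Hdom g Hg)).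
    exact (is_derive_charge _ a b u g Hsol Hg). }
  rewrite !charge_modL, Hl0 in Hcharge by (apply Hdom; assumption).
  pose proof (dot4_self_pos (u f) (proj1 (Hdom f Hf))).
  nra.
Qed.

Lemma dLq_modL_scrL mu eps (u v : V4) f i :
  (i < 4)%nat -> noncollision u -> lform u v = 0 ->
  dLq (modL mu eps) i u v f = dLq (scrL mu eps) i u v f.
Proof. intros Hi Hu Hl; rewrite dLq_modL, dLq_scrL, Hl by assumption; ring. Qed.

Lemma dLv_modL_scrL mu eps (u v : V4) f i :
  (i < 4)%nat -> noncollision u -> lform u v = 0 ->
  dLv (modL mu eps) i u v f = dLv (scrL mu eps) i u v f.
Proof. intros Hi Hu Hl; rewrite dLv_modL, dLv_scrL, Hl by assumption; ring. Qed.

Theorem proposition3 (mu eps : R) (a b : R) (u : R -> V4) :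
  0 < mu < / 2 -> 0 < eps < 1 ->
  a < 0 < b ->
  (* u stays in the domain of the Lagrangians on (a,b) *)
  (forall f, a < f < b ->
     nonzero4 (u f) /\
     ~ (KS1 (u f) = -1 /\ KS2 (u f) = 0 /\ KS3 (u f) = 0)) ->
  EL_solution (modL mu eps) a b u ->
  lform (u 0) (vel u 0) = 0 ->
  EL_solution (scrL mu eps) a b u.
Proof.
  intros _ _ H0 Hdom Hsol Hl0 f Hf.
  pose proof (modL_solution_lform_zero mu eps a b u H0 Hdom Hsol Hl0) as Hl.
  destruct (Hsol f Hf) as [Hex Hel]; split; [exact Hex|]; intros i Hi.
  rewrite <- (dLq_modL_scrL mu eps _ _ f i Hi (Hdom f Hf) (Hl f Hf)).
  apply (is_derive_ext_loc (fun g => dLv (modL mu eps) i (u g) (vel u g) g));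
    [|exact (Hel i Hi)].
  apply (locally_interval _ f a b); [apply Hf | apply Hf | intros g Hga Hgb].
  exact (dLv_modL_scrL mu eps _ _ g i Hi (Hdom g (conj Hga Hgb)) (Hl g (conj Hga Hgb))).
Qed.
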